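(* If $\mathcal A\subseteq J_q(n)$ has $|\mathcal A|=M\ge 2$ and minimum $L^1$-distance $2\delta$, then $\psi(\mathcal A)\subseteq[q]^n$ is a code of size $M$ with insdel distance $2\delta$.
   Context: $J_q(n)=\{(a_1,\dots,a_q)\in\mathbb Z_{\ge0}^q:\ \sum_{i=1}^q a_i=n\}$. The $L^1$-distance is $d_L(\mathbf a,\mathbf b)=\sum_{i=1}^q|a_i-b_i|$; the minimum $L^1$-distance of $\mathcal A$ is the minimum over distinct pairs. The map $\psi:J_q(n)\to[q]^n$ sends $(a_1,\dots,a_q)$ to the word consisting of $a_1$ copies of $1$, followed by $a_2$ copies of $2$, ..., followed by $a_q$ copies of $q$. The insdel distance $d_I(\mathbf u,\mathbf v)$ of $\mathbf u,\mathbf v\in[q]^n$ is the minimum number of insertions and deletions transforming one into the other (equivalently $2n-2\ell_{\rm LCS}(\mathbf u,\mathbf v)$, with $\ell_{\rm LCS}$ the length of a longest common subsequence); the insdel distance of a code is the minimum over distinct codewords. *)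

From mathcomp Require Import all_boot.
Set Implicit Arguments. Unset Strict Implicit. Unset Printing Implicit Defensive.

Definition inJ (q n : nat) (a : q.-tuple nat) : bool := sumn a == n.

(* L1 distance between compositions; |x-y| on nat as (x-y)+(y-x) with truncated subtraction. *)
Definition dL (q : nat) (a b : q.-tuple nat) : nat :=
  \sum_(i < q) ((tnth a i - tnth b i) + (tnth b i - tnth a i)).

(* psi: a_1 copies of symbol 1, then a_2 copies of symbol 2, ... ; symbols of [q] are 'I_q. *)
Definition psi (q : nat) (a : q.-tuple nat) : seq 'I_q :=
  flatten [seq nseq (tnth a i) i | i <- enum 'I_q].

(* length of a longest common subsequence: every subsequence of u is a mask of u *)
Definition lcs (T : eqType) (u v : seq T) : nat :=
  \max_(m : (size u).-tuple bool | subseq (mask m u) v) size (mask m u).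

Definition dI (T : eqType) (u v : seq T) : nat := (size u + size v) - 2 * lcs u v.

Definition min_dist (T : eqType) (dist : T -> T -> nat) (C : seq T) (d : nat) : Prop :=
  (forall x y, x \in C -> y \in C -> x != y -> d <= dist x y) /\
  (exists x y, [/\ x \in C, y \in C, x != y & dist x y = d]).

From mathcomp Require Import all_boot zify.
Set Implicit Arguments.
Unset Strict Implicit.
Unset Printing Implicit Defensive.

(* Every common subsequence of two words uses
   each letter x at most min(#x in u, #x in v) times, and for sorted words
   the sorted word with exactly these multiplicities is a common subsequence;
   hence lcs(psi a, psi b) = sum_i min(a_i, b_i).  Since |a_i - b_i| =
   a_i + b_i - 2 min(a_i, b_i), this gives d_I(psi a, psi b) = d_L(a, b) on
   J_q(n), and psi is injective, so it carries minimum distances over. *)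

Section BlockWords.

Variable T : finType.

Lemma size_sum_count_mem (w : seq T) : size w = \sum_(x : T) count_mem x w.
Proof.
elim: w => [|y w IHw] /=; first by rewrite big1.
rewrite big_split /= -IHw (bigD1 y) //= eqxx big1 ?add1n ?addn0 //.
by move=> x /negPf; rewrite eq_sym => ->.
Qed.

Definition blocks (c : T -> nat) : seq T := flatten [seq nseq (c x) x | x <- enum T].

Lemma count_blocks (c : T -> nat) (x : T) : count_mem x (blocks c) = c x.
Proof.
rewrite count_flatten -map_comp sumnE big_map big_enum /=.
rewrite (bigD1 x) //= count_nseq /= eqxx mul1n big1 ?addn0 // => y /negPf yNx.
by rewrite count_nseq /= yNx.
Qed.

Lemma size_blocks (c : T -> nat) : size (blocks c) = \sum_(x : T) c x.
Proof. by rewrite size_sum_count_mem; apply: eq_bigr => x _; rewrite count_blocks. Qed.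

Lemma subseq_blocks (c d : T -> nat) :
  (forall x, c x <= d x) -> subseq (blocks c) (blocks d).
Proof.
move=> le_cd; rewrite /blocks; elim: (enum T) => [|x s IHs] //=.
rewrite cat_subseq // -(subnKC (le_cd x)) nseqD.
exact: prefix_subseq.
Qed.

End BlockWords.

Section LongestCommonSubsequence.

Variable T : eqType.

Lemma leq_size_lcs (u v w : seq T) : subseq w u -> subseq w v -> size w <= lcs u v.
Proof.
case/subseqP=> m size_m ->{w} sub_v.
have size_m' : size m == size u by rewrite size_m.
exact: (leq_bigmax_cond (F := fun m : (size u).-tuple bool => size (mask m u))
          (Tuple size_m')).
Qed.

Lemma lcs_leq (u v : seq T) (k : nat) :
  (forall w, subseq w u -> subseq w v -> size w <= k) -> lcs u v <= k.
Proof. by move=> bound; apply/bigmax_leqP => m /bound; apply; apply: mask_subseq. Qed.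

End LongestCommonSubsequence.

Lemma lcs_blocks (T : finType) (c d : T -> nat) :
  lcs (blocks c) (blocks d) = \sum_(x : T) minn (c x) (d x).
Proof.
apply/eqP; rewrite eqn_leq; apply/andP; split.
  apply: lcs_leq => w sub_c sub_d; rewrite size_sum_count_mem leq_sum // => x _.
  by rewrite leq_min -!(count_blocks _ x) !leq_count_subseq.
rewrite -(size_blocks (fun x => minn (c x) (d x))).
by apply: leq_size_lcs; apply: subseq_blocks => x; rewrite ?geq_minl ?geq_minr.
Qed.

Lemma psi_blocks (q : nat) (a : q.-tuple nat) : psi a = blocks (tnth a).
Proof. by []. Qed.

Lemma psi_inj (q : nat) : injective (@psi q).
Proof.
move=> a b eq_ab; apply: eq_from_tnth => i.
by rewrite -(count_blocks (tnth a)) -(count_blocks (tnth b)) -!psi_blocks eq_ab.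
Qed.

Lemma size_psi (q : nat) (a : q.-tuple nat) : size (psi a) = sumn a.
Proof. by rewrite psi_blocks size_blocks sumnE big_tuple. Qed.

Lemma dI_psi (q n : nat) (a b : q.-tuple nat) :
  inJ n a -> inJ n b -> dI (psi a) (psi b) = dL a b.
Proof.
rewrite /inJ !sumnE !big_tuple => /eqP sum_a /eqP sum_b.
rewrite /dI !psi_blocks lcs_blocks !size_blocks sum_a sum_b.
have dL_minn : dL a b + 2 * \sum_(i < q) minn (tnth a i) (tnth b i) = n + n.
  rewrite /dL -{1}sum_a -sum_b big_distrr -!big_split /=.
  by apply: eq_bigr => i _; move: (tnth a i) (tnth b i) => x y; lia.
by rewrite -dL_minn addnK.
Qed.

Lemma min_dist_map (S T : eqType) (distS : S -> S -> nat) (distT : T -> T -> nat)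
    (f : S -> T) (C : seq S) (d : nat) :
  injective f -> {in C &, forall x y, distT (f x) (f y) = distS x y} ->
  min_dist distS C d -> min_dist distT (map f C) d.
Proof.
move=> inj_f dist_f [le_d [x [y [xC yC xy dxy]]]]; split.
  move=> _ _ /mapP[x' x'C ->] /mapP[y' y'C ->]; rewrite (inj_eq inj_f) => x'y'.
  by rewrite dist_f //; apply: le_d.
by exists (f x), (f y); rewrite !map_f ?(inj_eq inj_f) ?dist_f.
Qed.

Theorem corollary4p2 (q n M delta : nat) (A : seq (q.-tuple nat)) :
  uniq A -> all (inJ n) A -> size A = M -> 2 <= M ->
  min_dist (@dL q) A (2 * delta) ->
  [/\ all (fun w => size w == n) (map (@psi q) A),
      uniq (map (@psi q) A),
      size (map (@psi q) A) = M
    & min_dist (@dI _) (map (@psi q) A) (2 * delta)].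
Proof.
move=> uniq_A /allP A_J size_A _ min_dL; split.
- by apply/allP => _ /mapP[a /A_J aJ ->]; rewrite size_psi.
- by rewrite map_inj_uniq //; apply: psi_inj.
- by rewrite size_map.
- apply: min_dist_map min_dL; first exact: psi_inj.
  by move=> a b /A_J aJ /A_J bJ; apply: dI_psi aJ bJ.
Qed.
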